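(* Let $P \subset \mathbb{R}$ be a finite or countably infinite discrete set (containing none of its accumulation points). Let $\mathcal{H} = \ell^2(P)$ with orthonormal basis $(\psi_\lambda)_{\lambda\in P}$, and let $K$ be the self-adjoint (possibly unbounded) operator on $\mathcal{H}$ with $K\psi_\lambda = \lambda\psi_\lambda$ for all $\lambda\in P$ (defined on its maximal domain). Let $v\in\mathcal{H}$ be a cyclic vector for $K$, i.e. $v$ lies in $\bigcap_{n\ge 0}\operatorname{Dom}(K^n)$ and the span of $\{v, Kv, K^2v,\dots\}$ is dense in $\mathcal{H}$. On $\tilde{\mathcal H} = \mathcal{H}\oplus\mathbb{C}$ define the self-adjoint operators $$A(x\oplus\alpha) = (Kx + \alpha v)\oplus \langle v, x\rangle,\quad x\in\operatorname{Dom}(K),\ \alpha\in\mathbb{C},\qquad B(x\oplus\alpha) = 0\oplus\alpha,$$ i.e. $A = \begin{pmatrix} K & v\\ \langle v,\cdot\rangle & 0\end{pmatrix}$ and $B = \begin{pmatrix} 0&0\\0&1\end{pmatrix}$. Then $$\bigcup_{t \in \mathbb{R}} \sigma(A+tB) = \mathbb{R} \setminus P.$$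
   Context: $\sigma(T)$ denotes the spectrum of an operator $T$. The inner product $\langle\cdot,\cdot\rangle$ is linear in the second argument. *)

From HB Require Import structures.
From mathcomp Require Import all_boot all_order all_algebra.
From mathcomp Require Import all_classical all_reals all_analysis.
From mathcomp Require Import complex.
Set Implicit Arguments. Unset Strict Implicit. Unset Printing Implicit Defensive.
Import Order.TTheory GRing.Theory Num.Theory.
Local Open Scope classical_set_scope.
Local Open Scope ring_scope.

Section Defs.
Variable R : realType.
Local Notation C := R[i].

Definition normc2 (z : C) : R := (complex.Re z) ^+ 2 + (complex.Im z) ^+ 2.

(* elements of l^2(P) are represented as functions R -> C vanishing off P *)
Definition l2 (P : set R) (x : R -> C) : Prop :=
  (forall l, ~ P l -> x l = 0) /\
  (\esum_(l in P) (normc2 (x l))%:E < +oo)%E.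

Definition sqnorm (P : set R) (x : R -> C) : R :=
  fine (\esum_(l in P) (normc2 (x l))%:E).

Definition rsum (P : set R) (f : R -> R) : R :=
  fine (\esum_(l in P) (Num.max (f l) 0)%:E) -
  fine (\esum_(l in P) (Num.max (- f l) 0)%:E).

Definition csum (P : set R) (f : R -> C) : C :=
  Complex (rsum P (fun l => complex.Re (f l))) (rsum P (fun l => complex.Im (f l))).

(* inner product on l^2(P), linear in the second argument *)
Definition inner (P : set R) (v x : R -> C) : C :=
  csum P (fun l => conjc (v l) * x l).

Definition Kop (x : R -> C) : R -> C := fun l => (l%:C)%C * x l.

Definition domK (P : set R) (x : R -> C) : Prop := l2 P x /\ l2 P (Kop x).

Definition cyclic_vec (P : set R) (v : R -> C) : Prop :=
  (forall n : nat, l2 P (fun l => (l%:C)%C ^+ n * v l)) /\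
  (forall x, l2 P x -> forall eps : R, 0 < eps ->
     exists (N : nat) (c : nat -> C),
       sqnorm P (fun l => x l - \sum_(n < N) c n * ((l%:C)%C ^+ n * v l)) < eps).

Definition Ht := ((R -> C) * C)%type.
Definition Hspace (P : set R) (u : Ht) : Prop := l2 P u.1.
Definition hnorm2 (P : set R) (u : Ht) : R := sqnorm P u.1 + normc2 u.2.
Definition hadd (u w : Ht) : Ht := (fun l => u.1 l + w.1 l, u.2 + w.2).
Definition hsub (u w : Ht) : Ht := (fun l => u.1 l - w.1 l, u.2 - w.2).
Definition hscale (z : C) (u : Ht) : Ht := (fun l => z * u.1 l, z * u.2).

(* spectrum of an operator T with domain D in Htilde: z is in the resolvent
   set iff T - z : D -> Htilde is a bijection with bounded inverse *)
Definition spectrum (P : set R) (D : Ht -> Prop) (T : Ht -> Ht) : set C :=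
  [set z | ~ exists M : R, forall y, Hspace P y ->
      exists x, [/\ D x, hsub (T x) (hscale z x) = y,
                    hnorm2 P x <= M * hnorm2 P y &
                    forall x', D x' -> hsub (T x') (hscale z x') = y -> x' = x]].

Definition domA (P : set R) (u : Ht) : Prop := domK P u.1.
Definition Aop (P : set R) (v : R -> C) (u : Ht) : Ht :=
  (fun l => Kop u.1 l + u.2 * v l, inner P v u.1).
Definition Bop (u : Ht) : Ht := (fun _ => 0, u.2).
Definition ApB (P : set R) (v : R -> C) (t : R) (u : Ht) : Ht :=
  hadd (Aop P v u) (hscale (t%:C)%C (Bop u)).

Definition discrete_set (P : set R) : Prop :=
  forall l, P l -> exists2 e : R, 0 < e &
    forall m, P m -> `|m - l| < e -> m = l.

End Defs.

From HB Require Import structures.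
From mathcomp Require Import all_boot all_order all_algebra.
From mathcomp Require Import all_classical all_reals all_analysis.
From mathcomp Require Import complex.
From mathcomp Require Import ring lra.
Import Order.TTheory GRing.Theory Num.Theory.
Local Open Scope classical_set_scope.
Local Open Scope ring_scope.
Set Implicit Arguments. Unset Strict Implicit. Unset Printing Implicit Defensive.

(* Off the real line and at the points c of P, A + tB - z is inverted explicitly: the
   equation (A + tB - z)(x (+) a) = y gives x = (K - z)^-1 (y - a v) away from z, and
   (K - z)^-1 is bounded there, because |l - z| >= |Im z| when z is nonreal and because P is
   discrete when z = c.  For z nonreal, a is then obtained by dividing by the Schur complement
   t - z - <v, (K - z)^-1 v>, whose imaginary part has the sign of -Im z; for z = c, the c-th
   coordinate gives a = y(c) / v(c), where v(c) != 0 by cyclicity.  Conversely, let r be a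
   real number outside P.  If r is at positive distance from P, then (K - r)^-1 v (+) -1 is an
   eigenvector of A + tB for the real number t = r + <v, (K - r)^-1 v>.  Otherwise r is an
   accumulation point of P, and vectors supported on two points of P close to r and
   orthogonal to v are approximate eigenvectors of A. *)

Section NonnegSum.
Variables (R : realType) (P : set R).
Implicit Types (f g : R -> R) (c : R).

Definition pesum f : \bar R := (\esum_(l in P) (f l)%:E)%E.
Definition psummable f := (pesum f < +oo)%E.
Definition psum f : R := fine (pesum f).
Definition nneg f := forall l, P l -> 0 <= f l.

Lemma pesum_ge0 f : nneg f -> (0 <= pesum f)%E.
Proof. by move=> f0; apply: esum_ge0 => l Pl; rewrite lee_fin f0. Qed.

Lemma le_pesum f g : (forall l, P l -> f l <= g l) -> (pesum f <= pesum g)%E.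
Proof. by move=> fg; apply: le_esum => l Pl; rewrite lee_fin fg. Qed.

Lemma psummable_le f g :
  (forall l, P l -> f l <= g l) -> psummable g -> psummable f.
Proof. by move=> fg; apply: le_lt_trans; apply: le_pesum. Qed.

Lemma pesumE f : nneg f -> psummable f -> pesum f = (psum f)%:E.
Proof. by move=> f0 fS; rewrite /psum fineK // ge0_fin_numE // pesum_ge0. Qed.

Lemma psum_ge0 f : nneg f -> 0 <= psum f.
Proof. by move=> f0; apply: fine_ge0; apply: pesum_ge0. Qed.

Lemma ler_psum f g : nneg f -> (forall l, P l -> f l <= g l) -> psummable g ->
  psum f <= psum g.
Proof.
move=> f0 fg gS; have g0 : nneg g by move=> l Pl; exact: le_trans (f0 l Pl) (fg l Pl).
by rewrite -lee_fin -pesumE ?(psummable_le fg) // -pesumE //; apply: le_pesum.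
Qed.

Lemma eq_psum f g : (forall l, P l -> f l = g l) -> psum f = psum g.
Proof. by move=> fg; rewrite /psum /pesum (eq_esum (b := fun l => (g l)%:E)) // => l /fg ->. Qed.

Lemma pesumD f g : nneg f -> nneg g ->
  pesum (fun l => f l + g l) = (pesum f + pesum g)%E.
Proof.
by move=> f0 g0; rewrite /pesum -esumD => [|l /f0|l /g0]; rewrite ?lee_fin.
Qed.

Lemma psummableD f g : nneg f -> nneg g -> psummable f -> psummable g ->
  psummable (fun l => f l + g l).
Proof. by move=> f0 g0 fS gS; rewrite /psummable pesumD // !pesumE // -EFinD ltry. Qed.

Lemma psumD f g : nneg f -> nneg g -> psummable f -> psummable g ->
  psum (fun l => f l + g l) = psum f + psum g.
Proof. by move=> f0 g0 fS gS; rewrite /psum pesumD // !pesumE. Qed.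

Let pesumZ_le f c : 0 < c -> nneg f ->
  (pesum (fun l => (c * f l)%R) <= c%:E * pesum f)%E.
Proof.
move=> c0 f0; apply: ge_ereal_sup => /= _ [X [finX XP]] <-.
rewrite fsumEFin // -mulr_fsumr EFinM lee_pmul2l ?lte_fin // -fsumEFin //.
by apply: ereal_sup_ubound; exists X.
Qed.

Lemma pesumZ f c : 0 <= c -> nneg f -> pesum (fun l => c * f l) = (c%:E * pesum f)%E.
Proof.
move=> c0 f0; have [->|cn0] := eqVneq c 0.
  by rewrite mul0e /pesum esum1 // => l _; rewrite mul0r.
have cpos : 0 < c by rewrite lt_def cn0.
apply/eqP; rewrite eq_le pesumZ_le //=.
have cf0 : nneg (fun l => c * f l) by move=> l Pl; rewrite mulr_ge0 ?f0.
have ci : 0 < c^-1 by rewrite invr_gt0.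
have := pesumZ_le ci cf0.
rewrite (_ : pesum _ = pesum f); last first.
  by apply: eq_esum => l _; rewrite mulKf.
by move=> H; rewrite -(@lee_pmul2l _ c^-1%:E) ?lte_fin // muleA -EFinM mulVf // mul1e.
Qed.

Lemma psummableZ f c : 0 <= c -> nneg f -> psummable f -> psummable (fun l => c * f l).
Proof. by move=> c0 f0 fS; rewrite /psummable pesumZ // pesumE // -EFinM ltry. Qed.

Lemma psumZ f c : 0 <= c -> nneg f -> psummable f -> psum (fun l => c * f l) = c * psum f.
Proof. by move=> c0 f0 fS; rewrite /psum pesumZ // pesumE. Qed.

Lemma pesum0 : pesum (fun _ => 0) = 0%E.
Proof. by rewrite /pesum esum1. Qed.

Lemma psum0 : psum (fun _ => 0) = 0.
Proof. by rewrite /psum pesum0. Qed.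

Lemma psummable0 : psummable (fun _ => 0).
Proof. by rewrite /psummable pesum0. Qed.

Lemma pesum_point f a : P a -> (forall l, l != a -> f l = 0) -> 0 <= f a ->
  pesum f = (f a)%:E.
Proof.
move=> Pa fa0 fa_ge0; rewrite /pesum (esumID [set a]); last first.
  by move=> l Pl; have [->|/fa0 ->] := eqVneq l a; rewrite lee_fin.
rewrite [X in (_ + X)%E]esum1 ?adde0; last by move=> l [_ /eqP/fa0 ->].
rewrite (_ : P `&` [set a] = [set a]) ?esum_set1 ?lee_fin //.
by apply/seteqP; split => l /=; [case=> _ ->|move=> ->].
Qed.

Lemma psum_point f a : P a -> (forall l, l != a -> f l = 0) -> 0 <= f a ->
  psum f = f a.
Proof. by move=> Pa fa0 fa_ge0; rewrite /psum (pesum_point Pa). Qed.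

Lemma psummable_point f a : P a -> (forall l, l != a -> f l = 0) -> 0 <= f a ->
  psummable f.
Proof. by move=> Pa fa0 fa_ge0; rewrite /psummable (pesum_point Pa) // ltry. Qed.

Lemma psum_ge_point f a : nneg f -> psummable f -> P a -> f a <= psum f.
Proof.
move=> f0 fS Pa; pose fa l := if l == a then f a else 0.
have fa0 l : l != a -> fa l = 0 by rewrite /fa => /negbTE ->.
have -> : f a = psum fa by rewrite (psum_point Pa fa0) /fa eqxx ?f0.
apply: ler_psum => // [l Pl|l Pl]; rewrite /fa; first by case: ifP; rewrite ?f0.
by case: ifP => [/eqP ->|_]; rewrite ?f0.
Qed.

End NonnegSum.

Lemma pospart_ge0 (R : realDomainType) (x : R) : 0 <= Num.max x 0.
Proof. by case: (ger0P x) => // /ltW. Qed.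

Lemma pospart_le_norm (R : realDomainType) (x : R) : Num.max x 0 <= `|x|.
Proof. by rewrite ge_max ler_norm normr_ge0. Qed.

Lemma pospart_sub_negpart (R : realDomainType) (x : R) : Num.max x 0 - Num.max (- x) 0 = x.
Proof. by case: (ger0P x) => hx; case: (ger0P (- x)) => hnx; lra. Qed.

Section SignedSum.
Variables (R : realType) (P : set R).
Implicit Types (f g : R -> R) (c : R).

Definition abs_summable f := psummable P (fun l => `|f l|).

Let pos f l := Num.max (f l) 0.
Let neg f l := Num.max (- f l) 0.

Let nneg_pos f : nneg P (pos f). Proof. by move=> l _; exact: pospart_ge0. Qed.
Let nneg_neg f : nneg P (neg f). Proof. by move=> l _; exact: pospart_ge0. Qed.

Let summable_pos f : abs_summable f -> psummable P (pos f).
Proof. by apply: psummable_le => l _; exact: pospart_le_norm. Qed.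

Let summable_neg f : abs_summable f -> psummable P (neg f).
Proof. by apply: psummable_le => l _; rewrite -normrN; exact: pospart_le_norm. Qed.

Lemma abs_summable_le f g :
  (forall l, P l -> `|f l| <= g l) -> psummable P g -> abs_summable f.
Proof. exact: psummable_le. Qed.

Lemma eq_abs_summable f g : (forall l, P l -> f l = g l) -> abs_summable g -> abs_summable f.
Proof. by move=> fg; apply: abs_summable_le => l /fg ->. Qed.

Lemma abs_summableD f g : abs_summable f -> abs_summable g ->
  abs_summable (fun l => f l + g l).
Proof.
move=> fS gS; apply: (abs_summable_le (g := fun l => `|f l| + `|g l|)).
  by move=> l _; exact: ler_normD.
by apply: psummableD => // l _; exact: normr_ge0.
Qed.

Lemma abs_summableZ f c : abs_summable f -> abs_summable (fun l => c * f l).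
Proof.
move=> fS; apply: (abs_summable_le (g := fun l => `|c| * `|f l|)).
  by move=> l _; rewrite normrM.
by apply: psummableZ => // l _; exact: normr_ge0.
Qed.

Lemma abs_summableB f g : abs_summable f -> abs_summable g ->
  abs_summable (fun l => f l - g l).
Proof.
move=> fS gS; apply: abs_summableD => //.
by apply: (eq_abs_summable (g := fun l => -1 * g l)) => [l _|]; rewrite ?mulN1r ?abs_summableZ.
Qed.

Lemma abs_summable_nneg f : nneg P f -> psummable P f -> abs_summable f.
Proof. by move=> f0; apply: psummable_le => l /f0 ?; rewrite ger0_norm. Qed.

Let rsumE f : rsum P f = psum P (pos f) - psum P (neg f).
Proof. by []. Qed.

Lemma eq_rsum f g : (forall l, P l -> f l = g l) -> rsum P f = rsum P g.
Proof.
move=> fg; rewrite !rsumE (eq_psum (g := pos g)) ?(eq_psum (f := neg f) (g := neg g)) //.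
all: by move=> l /fg; rewrite /pos /neg => ->.
Qed.

Lemma rsumD f g : abs_summable f -> abs_summable g ->
  rsum P (fun l => f l + g l) = rsum P f + rsum P g.
Proof.
move=> fS gS; have fgS := abs_summableD fS gS.
have E : psum P (fun l => pos (fun l => f l + g l) l + (neg f l + neg g l)) =
         psum P (fun l => neg (fun l => f l + g l) l + (pos f l + pos g l)).
  apply: eq_psum => l _; rewrite /pos /neg.
  have := pospart_sub_negpart (f l + g l); have := pospart_sub_negpart (f l).
  have := pospart_sub_negpart (g l); rewrite opprD; lra.
have pfS := summable_pos fS; have nfS := summable_neg fS.
have pgS := summable_pos gS; have ngS := summable_neg gS.
have pfgS := summable_pos fgS; have nfgS := summable_neg fgS.
have nneg2 h k : nneg P h -> nneg P k -> nneg P (fun l => h l + k l).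
  by move=> h0 k0 l Pl; rewrite addr_ge0 ?h0 ?k0.
have := nneg2 _ _ (nneg_pos f) (nneg_pos g); have := nneg2 _ _ (nneg_neg f) (nneg_neg g).
move=> nfg pfg; rewrite !psumD ?psummableD // in E.
rewrite !rsumE; lra.
Qed.

Lemma rsumN f : rsum P (fun l => - f l) = - rsum P f.
Proof.
by rewrite !rsumE opprB; congr (_ - _); apply: eq_psum => l _; rewrite /pos /neg ?opprK.
Qed.

Let rsumZ_ge0 f c : 0 <= c -> abs_summable f -> rsum P (fun l => c * f l) = c * rsum P f.
Proof.
move=> c0 fS; have := summable_pos fS; have := summable_neg fS.
move=> nS pS; rewrite !rsumE mulrBr -!psumZ //.
by congr (_ - _); apply: eq_psum => l _; rewrite /pos /neg maxr_pMr // mulr0 ?mulrN.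
Qed.

Lemma rsumZ f c : abs_summable f -> rsum P (fun l => c * f l) = c * rsum P f.
Proof.
move=> fS; have [c0|c0] := lerP 0 c; first exact: rsumZ_ge0.
rewrite (eq_rsum (g := fun l => - (- c * f l))) => [|l _]; last by rewrite mulNr opprK.
by rewrite rsumN rsumZ_ge0 ?oppr_ge0 ?ltW // mulNr opprK.
Qed.

Lemma rsumB f g : abs_summable f -> abs_summable g ->
  rsum P (fun l => f l - g l) = rsum P f - rsum P g.
Proof.
move=> fS gS; rewrite -rsumN -rsumD //.
by apply: (eq_abs_summable (g := fun l => -1 * g l)) => [l _|]; rewrite ?mulN1r ?abs_summableZ.
Qed.

Lemma rsum_nneg f : nneg P f -> psummable P f -> rsum P f = psum P f.
Proof.
move=> f0 fS; rewrite rsumE (eq_psum (g := f)) => [|l /f0 fl0]; last by rewrite /pos max_l.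
rewrite (eq_psum (f := neg f) (g := fun _ => 0)) ?psum0 ?subr0 // => l /f0 fl0.
by rewrite /neg max_r // oppr_le0.
Qed.

Lemma ler_rsum f g : abs_summable f -> abs_summable g ->
  (forall l, P l -> f l <= g l) -> rsum P f <= rsum P g.
Proof.
move=> fS gS fg; rewrite -subr_ge0 -rsumB // rsum_nneg.
- by apply: psum_ge0 => l /fg; rewrite subr_ge0.
- by move=> l /fg; rewrite subr_ge0.
by apply: psummable_le (abs_summableB gS fS) => l _; exact: ler_norm.
Qed.

Lemma rsum_point f a : P a -> (forall l, l != a -> f l = 0) -> rsum P f = f a.
Proof.
move=> Pa fa0; rewrite rsumE !(psum_point Pa) ?pospart_sub_negpart ?pospart_ge0 //.
  by move=> l /fa0; rewrite /neg => ->; rewrite oppr0 maxxx.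
by move=> l /fa0; rewrite /pos => ->; rewrite maxxx.
Qed.

Lemma rsum0 : rsum P (fun _ => 0) = 0.
Proof. by rewrite rsum_nneg ?psum0 ?psummable0. Qed.

End SignedSum.

Section NormSquare.
Variable R : realType.
Local Notation C := R[i].
Implicit Types (a b : C).

Lemma Re_add a b : complex.Re (a + b) = complex.Re a + complex.Re b.
Proof. by case: a; case: b. Qed.

Lemma Im_add a b : complex.Im (a + b) = complex.Im a + complex.Im b.
Proof. by case: a; case: b. Qed.

Lemma Im_sub a b : complex.Im (a - b) = complex.Im a - complex.Im b.
Proof. by case: a; case: b. Qed.

Lemma Re_mul a b :
  complex.Re (a * b) = complex.Re a * complex.Re b - complex.Im a * complex.Im b.
Proof. by case: a; case: b. Qed.

Lemma Im_mul a b :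
  complex.Im (a * b) = complex.Re a * complex.Im b + complex.Im a * complex.Re b.
Proof. by case: a; case: b. Qed.

Lemma complexP a b :
  complex.Re a = complex.Re b -> complex.Im a = complex.Im b -> a = b.
Proof. by case: a; case: b => ? ? ? ? /= -> ->. Qed.

Lemma realcB (r s : R) : (r%:C - s%:C)%C = ((r - s)%:C)%C :> C.
Proof. by apply: complexP; rewrite /= ?subr0. Qed.

Lemma normc2_ge0 a : 0 <= normc2 a.
Proof. by rewrite addr_ge0 ?sqr_ge0. Qed.

Lemma normc2M a b : normc2 (a * b) = normc2 a * normc2 b.
Proof. by case: a => ? ?; case: b => ? ?; rewrite /normc2 /=; ring. Qed.

Lemma normc2J a : normc2 (conjc a) = normc2 a.
Proof. by case: a => ? ?; rewrite /normc2 /= sqrrN. Qed.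

Lemma normc2N a : normc2 (- a) = normc2 a.
Proof. by case: a => ? ?; rewrite /normc2 /= !sqrrN. Qed.

Lemma normc2R (r : R) : normc2 (r%:C)%C = r ^+ 2.
Proof. by rewrite /normc2 /= expr0n addr0. Qed.

Lemma normc20 : normc2 (0 : C) = 0.
Proof. by rewrite /normc2 /= expr0n addr0. Qed.

Lemma normc21 : normc2 (1 : C) = 1.
Proof. by rewrite /normc2 /= expr0n expr1n addr0. Qed.

Lemma normc2D_le a b : normc2 (a + b) <= 2 * (normc2 a + normc2 b).
Proof.
case: a => a1 a2; case: b => b1 b2; rewrite /normc2 /=.
by have := sqr_ge0 (a1 - b1); have := sqr_ge0 (a2 - b2); nra.
Qed.

Lemma normc2B_le a b : normc2 (a - b) <= 2 * (normc2 a + normc2 b).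
Proof. by rewrite -(normc2N b); exact: normc2D_le. Qed.

Lemma normc2_eq0 a : (normc2 a == 0) = (a == 0).
Proof.
case: a => a1 a2; rewrite /normc2 /= paddr_eq0 ?sqr_ge0 // !sqrf_eq0.
by rewrite eq_complex.
Qed.

Lemma normc2_gt0 a : a != 0 -> 0 < normc2 a.
Proof. by rewrite lt_def normc2_eq0 normc2_ge0 andbT. Qed.

Lemma normc2V a : normc2 a^-1 = (normc2 a)^-1.
Proof.
have [->|a0] := eqVneq a 0; first by rewrite invr0 normc20 invr0.
move: (a0); rewrite -normc2_eq0; case: a a0 => a1 a2 a0; rewrite /normc2 /= => n0.
by field.
Qed.

Lemma conjc_mulr a : conjc a * a = (normc2 a)%:C%C.
Proof.
by case: a => ? ?; apply/eqP; rewrite eq_complex /normc2 /=; apply/andP; split; apply/eqP; ring.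
Qed.

Lemma Re_mul_le a b (e : R) : 0 < e ->
  complex.Re (a * b) <= (e * normc2 a + normc2 b / e) / 2.
Proof.
move=> e0; case: a => a1 a2; case: b => b1 b2; rewrite /normc2 /= -subr_ge0.
have -> : (e * (a1 ^+ 2 + a2 ^+ 2) + (b1 ^+ 2 + b2 ^+ 2) / e) / 2 - (a1 * b1 - a2 * b2) =
          ((e * a1 - b1) ^+ 2 + (e * a2 + b2) ^+ 2) / (2 * e).
  by field; rewrite gt_eqF.
by rewrite divr_ge0 ?addr_ge0 ?sqr_ge0 ?mulr_ge0 ?ltW.
Qed.

Let sqr_addr_subr_ge0 (x y : R) : 0 <= (x + y) ^+ 2 /\ 0 <= (x - y) ^+ 2.
Proof. by rewrite !sqr_ge0. Qed.

Lemma normRe_mul_le a b : `|complex.Re (a * b)| <= (normc2 a + normc2 b) / 2.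
Proof.
case: a => a1 a2; case: b => b1 b2; rewrite /normc2 /= ler_norml.
have [? ?] := sqr_addr_subr_ge0 a1 b1; have [? ?] := sqr_addr_subr_ge0 a2 b2.
by apply/andP; split; nra.
Qed.

Lemma normIm_mul_le a b : `|complex.Im (a * b)| <= (normc2 a + normc2 b) / 2.
Proof.
case: a => a1 a2; case: b => b1 b2; rewrite /normc2 /= ler_norml.
have [? ?] := sqr_addr_subr_ge0 a1 b2; have [? ?] := sqr_addr_subr_ge0 a2 b1.
by apply/andP; split; nra.
Qed.

End NormSquare.

Section ComplexSum.
Variables (R : realType) (P : set R).
Local Notation C := R[i].
Implicit Types (F G : R -> C).

Definition csummable F :=
  abs_summable P (fun l => complex.Re (F l)) /\ abs_summable P (fun l => complex.Im (F l)).

Lemma csummableZ F a : csummable F -> csummable (fun l => a * F l).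
Proof.
move=> [F1 F2]; split.
  apply: eq_abs_summable (abs_summableB (abs_summableZ _ F1) (abs_summableZ _ F2)) => l _.
  exact: Re_mul.
apply: eq_abs_summable (abs_summableD (abs_summableZ _ F2) (abs_summableZ _ F1)) => l _.
exact: Im_mul.
Qed.

Lemma eq_csum F G : (forall l, P l -> F l = G l) -> csum P F = csum P G.
Proof. by move=> FG; congr Complex; apply: eq_rsum => l /FG ->. Qed.

Lemma csumD F G : csummable F -> csummable G ->
  csum P (fun l => F l + G l) = csum P F + csum P G.
Proof.
move=> [F1 F2] [G1 G2]; apply: complexP; rewrite ?Re_add ?Im_add /= -rsumD //.
  by apply: eq_rsum => l _; rewrite Re_add.
by apply: eq_rsum => l _; rewrite Im_add.
Qed.

Lemma csumZ F a : csummable F -> csum P (fun l => a * F l) = a * csum P F.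
Proof.
move=> [F1 F2]; apply: complexP; rewrite ?Re_mul ?Im_mul /= -!rsumZ //.
  by rewrite -rsumB ?abs_summableZ //; apply: eq_rsum => l _; rewrite Re_mul.
by rewrite -rsumD ?abs_summableZ //; apply: eq_rsum => l _; rewrite Im_mul.
Qed.

Lemma csumB F G : csummable F -> csummable G ->
  csum P (fun l => F l - G l) = csum P F - csum P G.
Proof.
move=> FS GS; have NGS := csummableZ (-1) GS.
rewrite -mulN1r -csumZ // -csumD //.
by apply: eq_csum => l _; rewrite mulN1r.
Qed.

Lemma csum_point F b : P b -> (forall l, l != b -> F l = 0) -> csum P F = F b.
Proof.
move=> Pb Fb0; rewrite /csum !(rsum_point Pb) => [|l /Fb0 ->|l /Fb0 ->] //.
by case: (F b).
Qed.

End ComplexSum.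

Section SquareSummable.
Variables (R : realType) (P : set R).
Local Notation C := R[i].
Implicit Types (x y : R -> C) (a : C).

Let nneg_normc2 x : nneg P (fun l => normc2 (x l)).
Proof. by move=> l _; exact: normc2_ge0. Qed.

Lemma l2_vanish x l : l2 P x -> ~ P l -> x l = 0.
Proof. by case=> x0 _; exact: x0. Qed.

Lemma l2_psummable x : l2 P x -> psummable P (fun l => normc2 (x l)).
Proof. by case. Qed.

Lemma sqnormE x : sqnorm P x = psum P (fun l => normc2 (x l)).
Proof. by []. Qed.

Lemma sqnorm_ge0 x : 0 <= sqnorm P x.
Proof. exact: psum_ge0. Qed.

Lemma l2_dominated x y (c : R) : 0 <= c -> (forall l, ~ P l -> x l = 0) ->
  (forall l, P l -> normc2 (x l) <= c * normc2 (y l)) -> l2 P y ->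
  l2 P x /\ sqnorm P x <= c * sqnorm P y.
Proof.
move=> c0 x0 xy yS.
have cyS := psummableZ c0 (@nneg_normc2 y) (l2_psummable yS).
split; first by split => //; exact: psummable_le cyS.
by rewrite -psumZ ?l2_psummable //; apply: ler_psum.
Qed.

Lemma l2Z x a : l2 P x -> l2 P (fun l => a * x l).
Proof.
move=> xS; apply: proj1 (l2_dominated (normc2_ge0 a) _ _ xS) => [l /(l2_vanish xS) ->|l _].
  by rewrite mulr0.
by rewrite normc2M.
Qed.

Lemma sqnormZ x a : l2 P x -> sqnorm P (fun l => a * x l) = normc2 a * sqnorm P x.
Proof.
by move=> xS; rewrite -psumZ ?normc2_ge0 ?l2_psummable //; apply: eq_psum => l _; rewrite normc2M.
Qed.

Lemma l2_psummableD x y : l2 P x -> l2 P y ->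
  psummable P (fun l => normc2 (x l) + normc2 (y l)).
Proof. by move=> xS yS; apply: psummableD => //; exact: l2_psummable. Qed.

Let l2_bound2 x y : l2 P x -> l2 P y ->
  psummable P (fun l => 2 * (normc2 (x l) + normc2 (y l))).
Proof.
move=> xS yS; apply: psummableZ => //; first by move=> l _; rewrite addr_ge0 ?normc2_ge0.
exact: l2_psummableD.
Qed.

Lemma l2D x y : l2 P x -> l2 P y -> l2 P (fun l => x l + y l).
Proof.
move=> xS yS; split; first by move=> l Pl; rewrite !l2_vanish ?addr0.
by apply: psummable_le (l2_bound2 xS yS) => l _; exact: normc2D_le.
Qed.

Lemma sqnormD_le x y : l2 P x -> l2 P y ->
  sqnorm P (fun l => x l + y l) <= 2 * (sqnorm P x + sqnorm P y).
Proof.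
move=> xS yS; rewrite -psumD ?l2_psummable // -psumZ //; last first.
- exact: l2_psummableD.
- by move=> l _; rewrite addr_ge0 ?normc2_ge0.
by apply: ler_psum (l2_bound2 xS yS) => // l _; exact: normc2D_le.
Qed.

Let opp_scale x : (fun l => - x l) = (fun l => -1 * x l).
Proof. by apply: funext => l; rewrite mulN1r. Qed.

Lemma l2B x y : l2 P x -> l2 P y -> l2 P (fun l => x l - y l).
Proof. by move=> xS yS; apply: l2D; rewrite // opp_scale; exact: l2Z. Qed.

Lemma sqnormB_le x y : l2 P x -> l2 P y ->
  sqnorm P (fun l => x l - y l) <= 2 * (sqnorm P x + sqnorm P y).
Proof.
move=> xS yS; have NyS : l2 P (fun l => - y l) by rewrite opp_scale; exact: l2Z.
by have := sqnormD_le xS NyS; rewrite opp_scale sqnormZ // normc2N normc21 mul1r.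
Qed.

Lemma l2_zero : l2 P (fun _ => 0).
Proof. by split => //; apply: psummable_le (psummable0 P) => l _; rewrite normc20. Qed.

Definition single (b : R) (p : C) : R -> C := fun l => if l == b then p else 0.

Lemma single_eq (b : R) (p : C) : single b p b = p.
Proof. by rewrite /single eqxx. Qed.

Lemma single_neq (b : R) (p : C) l : l != b -> single b p l = 0.
Proof. by rewrite /single => /negbTE ->. Qed.

Lemma l2_single (b : R) (p : C) : P b -> l2 P (single b p).
Proof.
move=> Pb; split; first by move=> l Pl; apply: single_neq; apply: contraPneq Pl => ->.
by apply: (psummable_point Pb) => [l /single_neq ->|]; rewrite ?normc20 ?normc2_ge0.
Qed.

Lemma sqnorm_single (b : R) (p : C) : P b -> sqnorm P (single b p) = normc2 p.
Proof.
move=> Pb; rewrite sqnormE (psum_point Pb) ?single_eq ?normc2_ge0 //.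
by move=> l /single_neq ->; rewrite normc20.
Qed.

Lemma sqnorm_ge_point x b : P b -> l2 P x -> normc2 (x b) <= sqnorm P x.
Proof.
move=> Pb xS; rewrite sqnormE; apply: (@psum_ge_point _ _ (fun l => normc2 (x l))) => //.
exact: l2_psummable. Qed.

Lemma sqnorm_eq0 x : l2 P x -> sqnorm P x = 0 -> forall l, x l = 0.
Proof.
move=> xS x0 l; have [Pl|nPl] := pselect (P l); last exact: l2_vanish.
apply/eqP; rewrite -normc2_eq0 eq_le normc2_ge0 andbT -x0.
exact: sqnorm_ge_point.
Qed.

End SquareSummable.

Section InnerProduct.
Variables (R : realType) (P : set R).
Local Notation C := R[i].
Implicit Types (v x y : R -> C) (a : C).

Lemma inner_csummable v x : l2 P v -> l2 P x -> csummable P (fun l => conjc (v l) * x l).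
Proof.
move=> vS xS.
have S : psummable P (fun l => 2^-1 * (normc2 (v l) + normc2 (x l))).
  apply: psummableZ; first by rewrite invr_ge0.
    by move=> l _; rewrite addr_ge0 ?normc2_ge0.
  exact: l2_psummableD.
by split; apply: abs_summable_le S => l _; rewrite [2^-1 * _]mulrC -(normc2J (v l));
  [exact: normRe_mul_le|exact: normIm_mul_le].
Qed.

Lemma eq_inner v x y : (forall l, P l -> x l = y l) -> inner P v x = inner P v y.
Proof. by move=> xy; apply: eq_csum => l /xy ->. Qed.

Lemma innerD v x y : l2 P v -> l2 P x -> l2 P y ->
  inner P v (fun l => x l + y l) = inner P v x + inner P v y.
Proof.
move=> vS xS yS; rewrite /inner -csumD; try exact: inner_csummable.
by apply: eq_csum => l _; rewrite mulrDr.
Qed.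

Lemma innerB v x y : l2 P v -> l2 P x -> l2 P y ->
  inner P v (fun l => x l - y l) = inner P v x - inner P v y.
Proof.
move=> vS xS yS; rewrite /inner -csumB; try exact: inner_csummable.
by apply: eq_csum => l _; rewrite mulrBr.
Qed.

Lemma innerZ v x a : l2 P v -> l2 P x -> inner P v (fun l => a * x l) = a * inner P v x.
Proof.
move=> vS xS; rewrite /inner -csumZ; try exact: inner_csummable.
by apply: eq_csum => l _; rewrite mulrCA.
Qed.

Lemma inner_point v x b : P b -> (forall l, l != b -> x l = 0) ->
  inner P v x = conjc (v b) * x b.
Proof. by move=> Pb xb0; apply: csum_point => // l /xb0 ->; rewrite mulr0. Qed.

Lemma inner_single v b p : P b -> inner P v (single b p) = conjc (v b) * p.
Proof. by move=> Pb; rewrite (inner_point v Pb (@single_neq _ b p)) single_eq. Qed.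

Lemma inner0 v : inner P v (fun _ => 0) = 0.
Proof.
by apply: complexP; rewrite /= (eq_rsum (g := fun _ => 0)) ?rsum0 // => l _; rewrite mulr0.
Qed.

Lemma rsum_normc2 x : l2 P x -> rsum P (fun l => normc2 (x l)) = sqnorm P x.
Proof. by move=> xS; rewrite rsum_nneg //; [move=> l _; exact: normc2_ge0|exact: l2_psummable]. Qed.

Lemma abs_summable_normc2 x : l2 P x -> abs_summable P (fun l => normc2 (x l)).
Proof.
by move=> xS; apply: abs_summable_nneg; [move=> l _; exact: normc2_ge0|exact: l2_psummable].
Qed.

Lemma normc2_inner_le v w : l2 P v -> l2 P w ->
  normc2 (inner P v w) <= sqnorm P v * sqnorm P w.
Proof.
move=> vS wS; set s := inner P v w; set V := sqnorm P v; set W := sqnorm P w.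
have [V0|V_neq0] := eqVneq V 0.
  have -> : s = 0.
    apply: complexP; rewrite /= (eq_rsum (g := fun _ => 0)) ?rsum0 // => l _;
    by rewrite (sqnorm_eq0 vS V0) conjc0 mul0r.
  by rewrite normc20 V0 mul0r.
have V_gt0 : 0 < V by rewrite lt_def V_neq0 sqnorm_ge0.
pose e := V^-1; have e_gt0 : 0 < e by rewrite invr_gt0.
have ssS := csummableZ (conjc s) (inner_csummable vS wS).
have key : normc2 s <= rsum P (fun l =>
    (e * normc2 s / 2) * normc2 (v l) + (e^-1 / 2) * normc2 (w l)).
  rewrite [X in X <= _](_ : _ = complex.Re (conjc s * s)); last by rewrite conjc_mulr.
  rewrite {2}/s /inner -csumZ; last exact: inner_csummable.
  apply: ler_rsum; [by case: ssS| |move=> l _].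
    by apply: abs_summableD; apply: abs_summableZ; exact: abs_summable_normc2.
  rewrite mulrA; apply: le_trans (Re_mul_le _ _ e_gt0) _.
  by rewrite !normc2M !normc2J le_eqVlt; apply/orP; left; apply/eqP; field; rewrite gt_eqF.
have vS2 := abs_summable_normc2 vS; have wS2 := abs_summable_normc2 wS.
rewrite rsumD ?abs_summableZ // !rsumZ // !rsum_normc2 // -/V -/W /e invrK in key.
rewrite [_ * V](_ : _ = normc2 s / 2) in key; last by field; rewrite gt_eqF.
lra.
Qed.

End InnerProduct.

Section LinearBound.
Variables (R : realType) (P : set R).
Local Notation C := R[i].
Implicit Types (f g : Ht R -> R).

Lemma hnorm2_ge0 (u : Ht R) : 0 <= hnorm2 P u.
Proof. by rewrite addr_ge0 ?sqnorm_ge0 ?normc2_ge0. Qed.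

Definition lin_bounded f := exists M, forall y, Hspace P y -> f y <= M * hnorm2 P y.

Lemma lin_bounded_le f g :
  (forall y, Hspace P y -> f y <= g y) -> lin_bounded g -> lin_bounded f.
Proof. by move=> fg [M gM]; exists M => y Hy; exact: le_trans (fg y Hy) (gM y Hy). Qed.

Lemma lin_boundedD f g : lin_bounded f -> lin_bounded g -> lin_bounded (fun y => f y + g y).
Proof.
move=> [M fM] [N gN]; exists (M + N) => y Hy; rewrite mulrDl.
exact: lerD (fM y Hy) (gN y Hy).
Qed.

Lemma lin_boundedZ (c : R) f : 0 <= c -> lin_bounded f -> lin_bounded (fun y => c * f y).
Proof. by move=> c0 [M fM]; exists (c * M) => y Hy; rewrite -mulrA ler_wpM2l ?fM. Qed.

Lemma lin_bounded_fst : lin_bounded (fun y => sqnorm P y.1).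
Proof. by exists 1 => y _; rewrite mul1r lerDl normc2_ge0. Qed.

Lemma lin_bounded_snd : lin_bounded (fun y => normc2 y.2).
Proof. by exists 1 => y _; rewrite mul1r lerDr sqnorm_ge0. Qed.

Lemma lin_bounded_normc2M (a : C) (h : Ht R -> C) :
  lin_bounded (fun y => normc2 (h y)) -> lin_bounded (fun y => normc2 (a * h y)).
Proof.
by move=> hB; apply: lin_bounded_le (lin_boundedZ (normc2_ge0 a) hB) => y _; rewrite normc2M.
Qed.

Lemma lin_bounded_normc2B (h k : Ht R -> C) : lin_bounded (fun y => normc2 (h y)) ->
  lin_bounded (fun y => normc2 (k y)) -> lin_bounded (fun y => normc2 (h y - k y)).
Proof.
move=> hB kB; apply: lin_bounded_le (lin_boundedZ (c := 2) _ (lin_boundedD hB kB)) => // y _.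
exact: normc2B_le.
Qed.

End LinearBound.

Section Spectrum.
Variables (R : realType) (P : set R) (D : Ht R -> Prop) (T : Ht R -> Ht R) (z : R[i]).
Local Notation res x := (hsub (T x) (hscale z x)).

Lemma notin_spectrum (sol : Ht R -> Ht R) :
  (forall y, Hspace P y -> D (sol y) /\ res (sol y) = y) ->
  lin_bounded P (fun y => hnorm2 P (sol y)) ->
  (forall x x', D x -> D x' -> res x = res x' -> x = x') ->
  ~ spectrum P D T z.
Proof.
move=> solP [M solM] res_inj; apply; exists M => y Hy.
have [Dsol solE] := solP y Hy; exists (sol y); split => // [|x' Dx' x'E].
  exact: solM.
by apply: res_inj; rewrite // solE.
Qed.

Lemma spectrum_of_noninjective x x' : D x -> D x' -> x <> x' ->
  Hspace P (res x) -> res x = res x' -> spectrum P D T z.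
Proof.
move=> Dx Dx' xx' Hr rE [M HM]; have [x0 [_ _ _ uniq]] := HM _ Hr.
by apply: xx'; rewrite (uniq x Dx) // (uniq x' Dx').
Qed.

Lemma spectrum_of_approx_eigen :
  (forall eps : R, 0 < eps -> exists x, [/\ D x, Hspace P (res x), 0 < hnorm2 P x &
     hnorm2 P (res x) <= eps * hnorm2 P x]) ->
  spectrum P D T z.
Proof.
move=> approx [M HM].
have eps_gt0 : 0 < (`|M| + 1)^-1 by rewrite invr_gt0 ltr_pwDr.
have [x [Dx Hr x_gt0 rx]] := approx _ eps_gt0.
have [x0 [_ _ xM uniq]] := HM _ Hr; rewrite -(uniq x Dx) // in xM.
have epsE : (`|M| + 1)^-1 * (`|M| + 1) = 1 by rewrite mulVf // gt_eqF // ltr_pwDr.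
have MM : M * hnorm2 P (res x) <= `|M| * hnorm2 P (res x).
  by rewrite ler_wpM2r ?hnorm2_ge0 ?ler_norm.
have := normr_ge0 M; have := hnorm2_ge0 P (res x); nra.
Qed.

End Spectrum.

Section Operator.
Variables (R : realType) (P : set R) (v : R -> R[i]).
Hypothesis vS : l2 P v.
Local Notation C := R[i].

Lemma ApB_residualE (t : R) (z : C) (x : Ht R) :
  hsub (ApB P v t x) (hscale z x) =
  (fun l => ((l%:C)%C - z) * x.1 l + x.2 * v l, inner P v x.1 + ((t%:C)%C - z) * x.2).
Proof.
rewrite /hsub /ApB /hadd /Aop /hscale /Bop /Kop /=; congr pair; last by ring.
by apply: funext => l; ring.
Qed.

Lemma domA_of_residual (z a : C) (x y : R -> C) : l2 P x -> l2 P y ->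
  (forall l, ((l%:C)%C - z) * x l + a * v l = y l) -> domA P (x, a).
Proof.
move=> xS yS xy; split => //=.
have -> : Kop x = fun l => z * x l + (y l - a * v l) by apply: funext => l; rewrite /Kop -xy; ring.
by apply: l2D; [exact: l2Z|apply: l2B => //; exact: l2Z].
Qed.

Lemma ApB_residual_inj (t : R) (z : C) :
  (forall x a, l2 P x -> (forall l, ((l%:C)%C - z) * x l + a * v l = 0) ->
     inner P v x + ((t%:C)%C - z) * a = 0 -> a = 0 /\ forall l, x l = 0) ->
  forall u u', domA P u -> domA P u' ->
  hsub (ApB P v t u) (hscale z u) = hsub (ApB P v t u') (hscale z u') -> u = u'.
Proof.
move=> ker [x a] [x' a'] [xS _] [x'S _]; rewrite !ApB_residualE /= in xS x'S *.
case=> E1 E2.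
have E1' l : ((l%:C)%C - z) * (x l - x' l) + (a - a') * v l = 0.
  by have /eqP := congr1 (fun f => f l) E1; rewrite /= -subr_eq0 => /eqP <-; ring.
have E2' : inner P v (fun l => x l - x' l) + ((t%:C)%C - z) * (a - a') = 0.
  by rewrite innerB //; move/eqP: E2; rewrite -subr_eq0 => /eqP <-; ring.
have [/eqP aa' xx'] := ker _ _ (l2B xS x'S) E1' E2'.
move: aa'; rewrite subr_eq0 => /eqP ->; congr pair.
by apply: funext => l; apply/eqP; rewrite -subr_eq0 xx'.
Qed.

(* The diagonal entries of (K - z)^-1; note the junk value rcoef z l = 0 when l = z. *)
Definition rcoef (z : C) (l : R) : C := ((l%:C)%C - z)^-1.

Lemma rcoef_real (r l : R) : rcoef (r%:C)%C l = ((l - r)^-1%:C)%C.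
Proof. by rewrite /rcoef realcB fmorphV. Qed.

Lemma l2_rcoefM z (E : R) (w : R -> C) : 0 <= E ->
  (forall l, P l -> normc2 (rcoef z l) <= E) -> l2 P w ->
  l2 P (fun l => rcoef z l * w l) /\ sqnorm P (fun l => rcoef z l * w l) <= E * sqnorm P w.
Proof.
move=> E0 zE wS; apply: l2_dominated => // [l /(l2_vanish wS) ->|l Pl]; first by rewrite mulr0.
by rewrite normc2M ler_wpM2r ?normc2_ge0 ?zE.
Qed.

Lemma normc2_rcoef_real (c d : R) : 0 < d -> (forall l, P l -> l != c -> d <= `|l - c|) ->
  forall l, P l -> normc2 (rcoef (c%:C)%C l) <= (d ^+ 2)^-1.
Proof.
move=> d0 cd l Pl; rewrite /rcoef realcB normc2V normc2R.
have [->|lc] := eqVneq l c.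
  by rewrite subrr expr0n /= invr0 invr_ge0 exprn_ge0 ?ltW.
have lc2 : 0 < (l - c) ^+ 2 by rewrite exprn_even_gt0 // subr_eq0.
have d2 : 0 < d ^+ 2 by rewrite exprn_gt0.
rewrite lef_pV2 ?posrE // -(real_normK (num_real (l - c))).
by rewrite lerXn2r ?nnegrE ?normr_ge0 ?cd //; exact: ltW.
Qed.

Lemma normc2_rcoef_nonreal z l : complex.Im z != 0 ->
  normc2 (rcoef z l) <= (complex.Im z ^+ 2)^-1.
Proof.
move=> z0; rewrite /rcoef normc2V lef_pV2 ?posrE ?exprn_even_gt0 //.
- by case: z z0 => a b /= _; rewrite /normc2 /= sub0r sqrrN lerDr sqr_ge0.
- apply: normc2_gt0; apply: contra z0; rewrite subr_eq0 => /eqP <-; by [].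
Qed.

End Operator.

Section PointOfP.
Variables (R : realType) (P : set R) (v : R -> R[i]) (t c e : R).
Hypotheses (vS : l2 P v) (Pc : P c) (vc0 : v c != 0) (e_gt0 : 0 < e)
  (c_isolated : forall l, P l -> l != c -> e <= `|l - c|).
Local Notation C := R[i].
Local Notation z := ((c%:C)%C : C).

(* The first row determines alpha and x off c; x(c) = gam is then fixed by the last row. *)
Let alpha (y : Ht R) : C := y.1 c / v c.
Let w (y : Ht R) l := y.1 l - alpha y * v l.
Let g (y : Ht R) l := rcoef z l * w y l.
Let gam (y : Ht R) : C := (y.2 - ((t%:C)%C - z) * alpha y - inner P v (g y)) / conjc (v c).
Let sol (y : Ht R) : Ht R := (fun l => g y l + gam y * single c 1 l, alpha y).

Let rcoef_bound l : P l -> normc2 (rcoef z l) <= (e ^+ 2)^-1.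
Proof. exact: normc2_rcoef_real. Qed.
Let E_ge0 : 0 <= (e ^+ 2)^-1. Proof. by rewrite invr_ge0 sqr_ge0. Qed.
Let l2_w y : Hspace P y -> l2 P (w y). Proof. by move=> yS; apply: l2B yS _; exact: l2Z. Qed.
Let l2_g y : Hspace P y -> l2 P (g y).
Proof. by move=> yS; case: (l2_rcoefM E_ge0 rcoef_bound (l2_w yS)). Qed.

Let sol_solves y : Hspace P y -> domA P (sol y) /\ hsub (ApB P v t (sol y)) (hscale z (sol y)) = y.
Proof.
move=> yS; have x1S : l2 P (sol y).1 by apply: l2D (l2_g yS) (l2Z _ (l2_single _ Pc)).
have E1 l : ((l%:C)%C - z) * (sol y).1 l + alpha y * v l = y.1 l.
  have [->|lc] := eqVneq l c; first by rewrite subrr mul0r add0r divfK.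
  rewrite /= single_neq // mulr0 addr0 /g mulrA /rcoef mulfV ?mul1r ?subrK //.
  by rewrite subr_eq0; apply: contra lc => /eqP [->].
split; first exact: (domA_of_residual vS x1S yS E1).
case: y yS E1 x1S => y1 y2 yS E1 _; rewrite ApB_residualE /=; congr pair; first exact: funext.
have gS := l2_g yS; have eS := l2_single 1 Pc.
rewrite innerD ?innerZ //; last exact: l2Z.
rewrite inner_single // mulr1 /gam divfK ?conjc_eq0 //=; ring.
Qed.

Let sol_bounded : lin_bounded P (fun y => hnorm2 P (sol y)).
Proof.
pose V := sqnorm P v; have V0 : 0 <= V := sqnorm_ge0 P v.
have Ev_gt0 : 0 < normc2 (v c) by apply: normc2_gt0.
have B_alpha : lin_bounded P (fun y => normc2 (alpha y)).
  apply: lin_bounded_le (lin_boundedZ (c := (normc2 (v c))^-1) _ (lin_bounded_fst P));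
    last by rewrite invr_ge0 ltW.
  move=> y yS; rewrite /alpha normc2M normc2V mulrC ler_pM2l ?invr_gt0 //.
  exact: sqnorm_ge_point.
have B_w : lin_bounded P (fun y => sqnorm P (w y)).
  apply: lin_bounded_le (lin_boundedZ (c := 2) _
    (lin_boundedD (lin_bounded_fst P) (lin_boundedZ (c := V) V0 B_alpha))) => // y yS.
  by rewrite [V * _]mulrC -sqnormZ //; apply: sqnormB_le => //; exact: l2Z.
have B_g : lin_bounded P (fun y => sqnorm P (g y)).
  apply: lin_bounded_le (lin_boundedZ E_ge0 B_w) => y yS.
  by case: (l2_rcoefM E_ge0 rcoef_bound (l2_w yS)).
have B_inner : lin_bounded P (fun y => normc2 (inner P v (g y))).
  apply: lin_bounded_le (lin_boundedZ V0 B_g) => y yS.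
  exact: normc2_inner_le (l2_g yS).
have B_gam : lin_bounded P (fun y => normc2 (gam y)).
  apply: lin_bounded_le (lin_bounded_normc2M (conjc (v c))^-1 (lin_bounded_normc2B
    (lin_bounded_normc2B (lin_bounded_snd P) (lin_bounded_normc2M _ B_alpha)) B_inner)).
  by move=> y _; rewrite /gam mulrC.
apply: lin_bounded_le
  (lin_boundedD (lin_boundedZ (c := 2) _ (lin_boundedD B_g B_gam)) B_alpha) => // y yS.
have eS := l2_single 1 Pc.
rewrite /hnorm2 /= lerD2r; have := sqnormD_le (l2_g yS) (l2Z (gam y) eS).
by rewrite sqnormZ // sqnorm_single // normc21 mulr1.
Qed.

Let kernel_trivial x a : l2 P x -> (forall l, ((l%:C)%C - z) * x l + a * v l = 0) ->
  inner P v x + ((t%:C)%C - z) * a = 0 -> a = 0 /\ forall l, x l = 0.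
Proof.
move=> xS xa0 ixa0.
have a0 : a = 0.
  by move/eqP: (xa0 c); rewrite subrr mul0r add0r mulf_eq0 (negbTE vc0) orbF => /eqP.
have x0 l : l != c -> x l = 0.
  move=> lc; move/eqP: (xa0 l); rewrite a0 mul0r addr0 mulf_eq0 realcB => /orP[|/eqP //].
  by rewrite eq_complex /= eqxx andbT subr_eq0 (negbTE lc).
split=> // l; have [->|/x0 //] := eqVneq l c.
move: ixa0; rewrite a0 mulr0 addr0 (inner_point v Pc x0) => /eqP.
by rewrite mulf_eq0 conjc_eq0 (negbTE vc0) => /eqP.
Qed.

Lemma notin_spectrum_point : ~ spectrum P (domA P) (ApB P v t) (c%:C)%C.
Proof. exact: notin_spectrum sol_solves sol_bounded (ApB_residual_inj vS kernel_trivial). Qed.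

End PointOfP.

Section NonReal.
Variables (R : realType) (P : set R) (v : R -> R[i]) (t : R) (z : R[i]).
Hypotheses (vS : l2 P v) (z_nonreal : complex.Im z != 0).
Local Notation C := R[i].

Let E := (complex.Im z ^+ 2)^-1.
Let E_ge0 : 0 <= E. Proof. by rewrite invr_ge0 sqr_ge0. Qed.
Let rcoef_bound l : P l -> normc2 (rcoef z l) <= E.
Proof. by move=> _; exact: normc2_rcoef_nonreal. Qed.

Let rcoefK l : ((l%:C)%C - z) * rcoef z l = 1.
Proof.
rewrite /rcoef mulfV // subr_eq0; apply: contra z_nonreal => /eqP <-; by [].
Qed.

Let g l := rcoef z l * v l.
Let l2_g : l2 P g. Proof. by case: (l2_rcoefM E_ge0 rcoef_bound vS). Qed.
Let schur : C := (t%:C)%C - z - inner P v g.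

Let Im_rcoef_sign l : 0 <= complex.Im z * complex.Im (rcoef z l).
Proof.
case: z => a b; rewrite /rcoef /= sub0r mulNr opprK mulrA -expr2.
by rewrite divr_ge0 ?sqr_ge0 // addr_ge0 ?sqr_ge0.
Qed.

Let Im_inner_sign : 0 <= complex.Im z * complex.Im (inner P v g).
Proof.
have [_ ImS] := inner_csummable vS l2_g.
rewrite [complex.Im _]/= -rsumZ // -(rsum0 P); apply: ler_rsum => [||l _].
- by apply: abs_summable_le (psummable0 P) => l _; rewrite normr0.
- exact: abs_summableZ.
rewrite /g mulrCA conjc_mulr Im_mul /= mulr0 add0r mulrA.
by rewrite mulr_ge0 ?normc2_ge0 ?Im_rcoef_sign.
Qed.

Let schur_bound : complex.Im z ^+ 2 <= normc2 schur.
Proof.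
have := Im_inner_sign; rewrite /normc2 /schur !Im_sub /= sub0r.
have := sqr_ge0 (complex.Re ((t%:C)%C - z - inner P v g)).
by have := sqr_ge0 (complex.Im (inner P v g)); nra.
Qed.

Let schur_neq0 : schur != 0.
Proof.
rewrite -normc2_eq0 gt_eqF //; apply: lt_le_trans schur_bound.
by rewrite exprn_even_gt0.
Qed.

Let u (y : Ht R) l := rcoef z l * y.1 l.
Let alpha (y : Ht R) : C := (y.2 - inner P v (u y)) / schur.
Let sol (y : Ht R) : Ht R := (fun l => u y l - alpha y * g l, alpha y).

Let l2_u y : Hspace P y -> l2 P (u y).
Proof. by move=> yS; case: (l2_rcoefM E_ge0 rcoef_bound yS). Qed.

Let sol_solves y : Hspace P y -> domA P (sol y) /\ hsub (ApB P v t (sol y)) (hscale z (sol y)) = y.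
Proof.
move=> yS; have x1S : l2 P (sol y).1 by apply: l2B (l2_u yS) (l2Z _ l2_g).
have E1 l : ((l%:C)%C - z) * (sol y).1 l + alpha y * v l = y.1 l.
  rewrite -[(sol y).1 l]/(u y l - alpha y * g l) /u /g.
  transitivity (((l%:C)%C - z) * rcoef z l * (y.1 l - alpha y * v l) + alpha y * v l).
    by ring.
  by rewrite rcoefK mul1r subrK.
split; first exact: (domA_of_residual vS x1S yS E1).
case: y yS E1 x1S => y1 y2 yS E1 _; rewrite ApB_residualE /=; congr pair; first exact: funext.
have uS := l2_u yS; rewrite innerB ?innerZ //; last exact: l2Z.
have -> : (t%:C)%C - z = schur + inner P v g by rewrite /schur subrK.
by rewrite /alpha /=; field.
Qed.

Let sol_bounded : lin_bounded P (fun y => hnorm2 P (sol y)).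
Proof.
pose V := sqnorm P v; have V0 : 0 <= V := sqnorm_ge0 P v.
pose G := sqnorm P g; have G0 : 0 <= G := sqnorm_ge0 P g.
have B_u : lin_bounded P (fun y => sqnorm P (u y)).
  apply: lin_bounded_le (lin_boundedZ E_ge0 (lin_bounded_fst P)) => y yS.
  by case: (l2_rcoefM E_ge0 rcoef_bound yS).
have B_inner : lin_bounded P (fun y => normc2 (inner P v (u y))).
  apply: lin_bounded_le (lin_boundedZ V0 B_u) => y yS.
  exact: normc2_inner_le (l2_u yS).
have B_alpha : lin_bounded P (fun y => normc2 (alpha y)).
  apply: lin_bounded_le (lin_bounded_normc2M schur^-1
    (lin_bounded_normc2B (lin_bounded_snd P) B_inner)) => y _.
  by rewrite /alpha mulrC.
apply: lin_bounded_le (lin_boundedD (lin_boundedZ (c := 2) _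
  (lin_boundedD B_u (lin_boundedZ G0 B_alpha))) B_alpha) => // y yS.
rewrite /hnorm2 /= lerD2r [G * _]mulrC -sqnormZ //.
by apply: sqnormB_le (l2_u yS) _; exact: l2Z.
Qed.

Let kernel_trivial x a : l2 P x -> (forall l, ((l%:C)%C - z) * x l + a * v l = 0) ->
  inner P v x + ((t%:C)%C - z) * a = 0 -> a = 0 /\ forall l, x l = 0.
Proof.
move=> xS xa0 ixa0.
have xE l : x l = - a * g l.
  move/(congr1 (fun w => rcoef z l * w)): (xa0 l).
  rewrite mulr0 mulrDr mulrA [rcoef z l * _]mulrC rcoefK mul1r => /eqP.
  by rewrite addr_eq0 => /eqP ->; rewrite /g; ring.
have a0 : a = 0.
  move: ixa0; rewrite (@eq_inner _ _ v x (fun l => - a * g l)) => [|l _]; last exact: xE.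
  rewrite innerZ // => /eqP; rewrite (_ : _ + _ = a * schur) ?mulf_eq0 ?(negbTE schur_neq0) ?orbF.
    by move/eqP.
  by rewrite /schur; ring.
by split=> // l; rewrite xE a0 oppr0 mul0r.
Qed.

Lemma notin_spectrum_nonreal : ~ spectrum P (domA P) (ApB P v t) z.
Proof. exact: notin_spectrum sol_solves sol_bounded (ApB_residual_inj vS kernel_trivial). Qed.

End NonReal.

Section RealSpectrum.
Variables (R : realType) (P : set R) (v : R -> R[i]).
Hypothesis vS : l2 P v.
Local Notation C := R[i].

Lemma spectrum_separated (r d : R) : ~ P r -> 0 < d ->
  (forall l, P l -> l != r -> d <= `|l - r|) ->
  exists t, spectrum P (domA P) (ApB P v t) (r%:C)%C.
Proof.
move=> nPr d_gt0 r_sep.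
have E0 : 0 <= (d ^+ 2)^-1 by rewrite invr_ge0 sqr_ge0.
pose x l := rcoef (r%:C)%C l * v l.
have [xS _] := l2_rcoefM E0 (normc2_rcoef_real d_gt0 r_sep) vS.
pose q := inner P v x.
have q_real : q = ((complex.Re q)%:C)%C.
  apply: complexP => //=; rewrite (eq_rsum (g := fun _ => 0)) ?rsum0 // => l _.
  by rewrite /x mulrCA conjc_mulr rcoef_real Im_mul /= mulr0 mul0r addr0.
exists (r + complex.Re q).
have xv l : ((l%:C)%C - (r%:C)%C) * x l + (-1) * v l = 0.
  have [Pl|nPl] := pselect (P l); last by rewrite /x (l2_vanish vS nPl) !mulr0 addr0.
  rewrite /x mulrA /rcoef mulfV ?mulN1r ?mul1r ?subrr // realcB.
  by rewrite eq_complex /= eqxx andbT subr_eq0; apply: contraPneq Pl => ->.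
have res0 : hsub (ApB P v (r + complex.Re q) (x, -1)) (hscale (r%:C)%C (x, -1)) =
            hsub (ApB P v (r + complex.Re q) (fun _ => 0, 0)) (hscale (r%:C)%C (fun _ => 0, 0)).
  rewrite !ApB_residualE; congr pair.
    by apply: funext => l; rewrite xv !mulr0 mul0r addr0.
  rewrite [inner _ _ _]/= inner0 -/q realcB addrAC subrr add0r mulr0 addr0.
  by rewrite {1}q_real mulrN1 subrr.
apply: (spectrum_of_noninjective (x := (x, -1)) (x' := (fun _ => 0, 0))) => //.
- exact: (domA_of_residual vS xS (l2_zero P) xv).
- apply: (domA_of_residual (z := (r%:C)%C) (a := 0) vS (l2_zero P) (l2_zero P)) => l.
  by rewrite !mulr0 mul0r addr0.
- by case=> _ /eqP; rewrite oppr_eq0 oner_eq0.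
rewrite /Hspace res0 ApB_residualE (_ : (fun l => _) = fun _ => 0); first exact: l2_zero.
by apply: funext => l; rewrite /= !mulr0 mul0r addr0.
Qed.

Lemma orth_two_points (a b : R) : P a -> P b -> b != a ->
  exists x, [/\ l2 P x, inner P v x = 0, x a = conjc (v b) &
                forall l, l != a -> l != b -> x l = 0].
Proof.
move=> Pa Pb ba; pose x l := single a (conjc (v b)) l + single b (- conjc (v a)) l.
have [aS bS] := (l2_single (conjc (v b)) Pa, l2_single (- conjc (v a)) Pb).
exists x; split; first exact: l2D.
- by rewrite innerD // !inner_single // mulrN mulrC subrr.
- by rewrite /x single_eq single_neq 1?eq_sym // addr0.
- by move=> l la lb; rewrite /x !single_neq // addr0.
Qed.

Lemma spectrum_accumulation (r : R) : (forall l, P l -> v l != 0) -> ~ P r ->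
  (forall rho, 0 < rho -> exists2 l, P l & `|l - r| < rho) ->
  spectrum P (domA P) (ApB P v 0) (r%:C)%C.
Proof.
move=> v_neq0 nPr r_acc; apply: spectrum_of_approx_eigen => eps eps_gt0.
pose rho := Num.min eps 1; have rho_gt0 : 0 < rho by rewrite lt_min eps_gt0 ltr01.
have rho2_le : rho ^+ 2 <= eps.
  have := ge_min eps eps 1; have := ge_min 1 eps 1; rewrite !lexx orbT /= -/rho.
  by move=> r1 re; rewrite expr2; nra.
have [a Pa ar] := r_acc rho rho_gt0.
have ar_gt0 : 0 < `|a - r| by rewrite normr_gt0 subr_eq0; apply: contraPneq nPr => <-.
have [b Pb br] := r_acc _ ar_gt0.
have ba : b != a by apply: contraTneq br => ->; rewrite ltxx.
have [x [xS ix xa x0]] := orth_two_points Pa Pb ba.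
pose y l := ((l%:C)%C - (r%:C)%C) * x l + 0 * v l.
have sq_le l : `|l - r| < rho -> (l - r) ^+ 2 <= rho ^+ 2.
  move=> /ltW lr; rewrite -(real_normK (num_real (l - r))).
  by rewrite lerXn2r ?nnegrE ?normr_ge0 // ltW.
have [yS y_le] : l2 P y /\ sqnorm P y <= rho ^+ 2 * sqnorm P x.
  apply: l2_dominated => // [|l nPl|l Pl]; first exact: sqr_ge0.
    by rewrite /y (l2_vanish xS nPl) (l2_vanish vS nPl) !mulr0 addr0.
  rewrite /y mul0r addr0 normc2M realcB normc2R.
  have [->|la] := eqVneq l a; first by rewrite ler_wpM2r ?normc2_ge0 ?sq_le.
  have [->|lb] := eqVneq l b; first by rewrite ler_wpM2r ?normc2_ge0 ?sq_le ?(lt_trans br).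
  by rewrite x0 // normc20 !mulr0.
exists (x, 0); rewrite ApB_residualE /= ix; split.
- exact: (domA_of_residual vS xS yS (fun l => erefl)).
- exact: yS.
- rewrite /hnorm2 /= normc20 addr0; apply: lt_le_trans (sqnorm_ge_point Pa xS).
  by rewrite xa normc2J normc2_gt0 ?v_neq0.
rewrite /hnorm2 /= mulr0 addr0 normc20 !addr0.
apply: le_trans y_le _; rewrite ler_wpM2r ?sqnorm_ge0 //.
Qed.

End RealSpectrum.

Lemma l2_poly_mul (R : realType) (P : set R) (v : R -> R[i]) :
  (forall n : nat, l2 P (fun l => (l%:C)%C ^+ n * v l)) ->
  forall (N : nat) (a : nat -> R[i]), l2 P (fun l => \sum_(n < N) a n * ((l%:C)%C ^+ n * v l)).
Proof.
move=> powS; elim=> [|N IHN] a.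
  by rewrite (_ : (fun l => _) = fun _ => 0); [exact: l2_zero|apply: funext => l; rewrite big_ord0].
rewrite (_ : (fun l => _) = fun l => \sum_(n < N) a n * ((l%:C)%C ^+ n * v l) +
  a N * ((l%:C)%C ^+ N * v l)); last by apply: funext => l; rewrite big_ord_recr.
by apply: l2D (IHN a) _; exact: l2Z.
Qed.

Lemma cyclic_vec_neq0 (R : realType) (P : set R) (v : R -> R[i]) (c : R) :
  cyclic_vec P v -> P c -> v c != 0.
Proof.
move=> [powS dense] Pc; apply/negP => /eqP vc0.
have [N [a close]] := dense _ (l2_single 1 Pc) _ (ltr01 : (0 : R) < 1).
have := sqnorm_ge_point Pc (l2B (l2_single 1 Pc) (l2_poly_mul powS N a)).
rewrite single_eq big1 ?subr0 ?normc21 => [|n _]; last by rewrite vc0 !mulr0.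
by move=> /(lt_le_trans close); rewrite ltxx.
Qed.

Lemma discrete_separated (R : realType) (P : set R) (c : R) : discrete_set P -> P c ->
  exists2 e : R, 0 < e & forall l, P l -> l != c -> e <= `|l - c|.
Proof.
move=> Pdisc Pc; have [e e_gt0 ce] := Pdisc c Pc; exists e => // l Pl.
by apply: contraNle => /(ce l Pl) ->; rewrite eqxx.
Qed.

Theorem lemma2p10 (R : realType) (P : set R) (hcount : countable P)
  (hdisc : discrete_set P) (v : R -> R[i]) (hv : l2 P v)
  (hcyc : cyclic_vec P v) :
  \bigcup_(t in [set: R]) spectrum P (domA P) (ApB P v t) =
  [set z : R[i] | exists2 r : R, z = (r%:C)%C & ~ P r].
Proof.
have v_neq0 l : P l -> v l != 0 := cyclic_vec_neq0 hcyc.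
apply/seteqP; split => [z [t _ zt] | _ [r -> nPr]].
- have [z_real|z_nonreal] := eqVneq (complex.Im z) 0; last first.
    by case: (notin_spectrum_nonreal hv z_nonreal zt).
  have zE : z = ((complex.Re z)%:C)%C by apply: complexP.
  exists (complex.Re z) => // Pr; rewrite zE in zt.
  have [e e_gt0 r_sep] := discrete_separated hdisc Pr.
  exact: notin_spectrum_point hv Pr (v_neq0 _ Pr) e_gt0 r_sep zt.
- have [[d d_gt0 r_sep]|r_acc] :=
    pselect (exists2 d : R, 0 < d & forall l, P l -> l != r -> d <= `|l - r|).
    by have [t rt] := spectrum_separated hv nPr d_gt0 r_sep; exists t.
  exists 0 => //; apply: spectrum_accumulation => // rho rho_gt0.
  apply: contra_notP r_acc => no_l; exists rho => // l Pl _.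
  by rewrite leNgt; apply/negP => lr; apply: no_l; exists l.
Qed.
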